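(* Let $(G,P,g)$ be the manifold in the context and $D$ the connection defined there. Then $D$ is flat: its curvature tensor $D_xD_yz-D_yD_xz-D_{[x,y]}z$ vanishes identically.
   Context: $G$ is a 4-dimensional real connected Lie group with Lie algebra having a basis $\{X_1,\dots,X_4\}$ of left-invariant vector fields satisfying, for real numbers $\lambda_1,\dots,\lambda_4$: $[X_1,X_2]=-[X_3,X_4]=\lambda_1X_1+\lambda_2X_2+\lambda_3X_3+\lambda_4X_4$, $[X_1,X_3]=[X_2,X_4]=\lambda_4X_1-\lambda_3X_2+\lambda_2X_3-\lambda_1X_4$, $[X_2,X_3]=[X_1,X_4]=0$. $P$ is the left-invariant tensor with $PX_1=X_3$, $PX_2=X_4$, $PX_3=X_1$, $PX_4=X_2$, and $g$ the left-invariant metric making $\{X_i\}$ orthonormal. Let $\nabla$ be the Levi-Civita connection of $g$, $F(x,y,z)=g((\nabla_xP)y,z)$, $\theta(x)=\sum_iF(X_i,X_i,x)$ the Lee form, $\Omega$ the vector field with $g(\Omega,x)=\theta(x)$, and $D_xy=\nabla_xy+\frac14\{g(x,y)P\Omega-\theta(Py)x\}$. *)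

From Stdlib Require Import Reals.
Open Scope R_scope.

(* The Lie algebra g of G, identified with left-invariant vector fields,
   written in coordinates w.r.t. the basis X1,...,X4:
   v = c1 v * X1 + c2 v * X2 + c3 v * X3 + c4 v * X4. *)
Record V4 : Type := mkV { c1 : R; c2 : R; c3 : R; c4 : R }.

Definition vadd (u v : V4) : V4 :=
  mkV (c1 u + c1 v) (c2 u + c2 v) (c3 u + c3 v) (c4 u + c4 v).
Definition vscal (a : R) (v : V4) : V4 :=
  mkV (a * c1 v) (a * c2 v) (a * c3 v) (a * c4 v).
Definition vsub (u v : V4) : V4 := vadd u (vscal (-1) v).
Definition vzero : V4 := mkV 0 0 0 0.

Definition X1 : V4 := mkV 1 0 0 0.
Definition X2 : V4 := mkV 0 1 0 0.
Definition X3 : V4 := mkV 0 0 1 0.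
Definition X4 : V4 := mkV 0 0 0 1.

Definition gmet (u v : V4) : R :=
  c1 u * c1 v + c2 u * c2 v + c3 u * c3 v + c4 u * c4 v.

Definition Pmap (v : V4) : V4 := mkV (c3 v) (c4 v) (c1 v) (c2 v).

Definition vecA (l1 l2 l3 l4 : R) : V4 := mkV l1 l2 l3 l4.
Definition vecB (l1 l2 l3 l4 : R) : V4 := mkV l4 (- l3) l2 (- l1).

(* The Lie bracket, the bilinear antisymmetric extension of
   [X1,X2] = -[X3,X4] = A, [X1,X3] = [X2,X4] = B, [X2,X3] = [X1,X4] = 0. *)
Definition lie (l1 l2 l3 l4 : R) (u v : V4) : V4 :=
  vadd
    (vscal (c1 u * c2 v - c2 u * c1 v - (c3 u * c4 v - c4 u * c3 v))
           (vecA l1 l2 l3 l4))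
    (vscal (c1 u * c3 v - c3 u * c1 v + (c2 u * c4 v - c4 u * c2 v))
           (vecB l1 l2 l3 l4)).

Definition is_torsion_free (l1 l2 l3 l4 : R) (nabla : V4 -> V4 -> V4) : Prop :=
  forall x y, vsub (nabla x y) (nabla y x) = lie l1 l2 l3 l4 x y.

(* Metric compatibility on left-invariant fields (g(y,z) is constant, so
   x(g(y,z)) = 0). *)
Definition is_metric (nabla : V4 -> V4 -> V4) : Prop :=
  forall x y z, gmet (nabla x y) z + gmet y (nabla x z) = 0.

Definition nablaP (nabla : V4 -> V4 -> V4) (x y : V4) : V4 :=
  vsub (nabla x (Pmap y)) (Pmap (nabla x y)).

Definition Ften (nabla : V4 -> V4 -> V4) (x y z : V4) : R :=
  gmet (nablaP nabla x y) z.

Definition theta (nabla : V4 -> V4 -> V4) (x : V4) : R :=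
  Ften nabla X1 X1 x + Ften nabla X2 X2 x + Ften nabla X3 X3 x
  + Ften nabla X4 X4 x.

(* Omega, the g-dual of theta: g(Omega, x) = theta(x) (X_i orthonormal). *)
Definition Omega (nabla : V4 -> V4 -> V4) : V4 :=
  mkV (theta nabla X1) (theta nabla X2) (theta nabla X3) (theta nabla X4).

Definition Dconn (nabla : V4 -> V4 -> V4) (x y : V4) : V4 :=
  vadd (nabla x y)
       (vscal (1/4) (vsub (vscal (gmet x y) (Pmap (Omega nabla)))
                          (vscal (theta nabla (Pmap y)) x))).

Definition curvD (l1 l2 l3 l4 : R) (nabla : V4 -> V4 -> V4) (x y z : V4) : V4 :=
  vsub (vsub (Dconn nabla x (Dconn nabla y z)) (Dconn nabla y (Dconn nabla x z)))
       (Dconn nabla (lie l1 l2 l3 l4 x y) z).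

(* The Koszul formula determines nabla explicitly, and a direct computation
   gives the Lee form Omega = 4 (l4 X1 - l3 X2 - l2 X3 + l1 X4).  Substituting
   both into D, all terms quadratic in y cancel except one, leaving
   D_x y = phi(x) J y for the linear form phi and the complex structure J
   defined below.  Hence D_x D_y z = - phi(x) phi(y) z is symmetric in x, y,
   and D_[x,y] z = 0 because phi kills both A and B, which span the derived
   algebra. *)
From Stdlib Require Import Reals Lra.
From Pilot Require Import Defs.
Open Scope R_scope.

Lemma V4_eq (u v : V4) :
  c1 u = c1 v -> c2 u = c2 v -> c3 u = c3 v -> c4 u = c4 v -> u = v.
Proof. destruct u, v; simpl; intros; subst; reflexivity. Qed.

Lemma gmet_sym (u v : V4) : gmet u v = gmet v u.
Proof. unfold gmet; ring. Qed.

Lemma gmet_subl (u v w : V4) : gmet (vsub u v) w = gmet u w - gmet v w.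
Proof. destruct u, v, w; unfold gmet, vsub, vadd, vscal; simpl; ring. Qed.

Lemma V4_gmet_basis (v : V4) :
  v = mkV (gmet v X1) (gmet v X2) (gmet v X3) (gmet v X4).
Proof. destruct v; apply V4_eq; unfold gmet, X1, X2, X3, X4; simpl; ring. Qed.

Definition phi (l1 l2 l3 l4 : R) (x : V4) : R :=
  l3 * c1 x + l4 * c2 x - l1 * c3 x - l2 * c4 x.

Definition Jmap (v : V4) : V4 := mkV (c4 v) (- c3 v) (c2 v) (- c1 v).

Lemma phi_lie (l1 l2 l3 l4 : R) (x y : V4) :
  phi l1 l2 l3 l4 (lie l1 l2 l3 l4 x y) = 0.
Proof. unfold phi, lie, vadd, vscal, vecA, vecB; simpl; ring. Qed.

Definition levi_civita (l1 l2 l3 l4 : R) (x y : V4) : V4 :=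
  let '(mkV a1 a2 a3 a4) := x in
  let '(mkV b1 b2 b3 b4) := y in
  mkV (  a1*b2*l1 + a1*b3*l4 + a2*b2*l2 + a2*b4*l4 - a3*b4*l1 + a3*b3*l2)
      (- a1*b1*l1 - a1*b3*l3 - a2*b1*l2 - a2*b4*l3 - a4*b4*l1 + a4*b3*l2)
      (  a1*b2*l3 - a1*b1*l4 - a4*b2*l2 - a3*b1*l2 - a3*b4*l3 - a4*b4*l4)
      (  a2*b2*l3 + a4*b2*l1 - a2*b1*l4 + a3*b1*l1 + a3*b3*l3 + a4*b3*l4).

(* Lazy reduction projects out of each [mkV] before expanding its fields;
   [unfold] followed by [simpl] duplicates nested vectors and exhausts memory. *)
Ltac expand_coords :=
  lazy [Defs.c1 Defs.c2 Defs.c3 Defs.c4 levi_civita phi Jmap gmet lie vecA vecB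
        Pmap vsub vadd vscal vzero X1 X2 X3 X4].

Section LeviCivita.

Variables (l1 l2 l3 l4 : R) (nabla : V4 -> V4 -> V4).
Hypothesis nabla_torsion_free : is_torsion_free l1 l2 l3 l4 nabla.
Hypothesis nabla_metric : is_metric nabla.

Let br := lie l1 l2 l3 l4.

Lemma koszul_formula (x y z : V4) :
  gmet (nabla x y) z =
  / 2 * (gmet (br x y) z - gmet (br y z) x + gmet (br z x) y).
Proof.
  assert (torsion : forall u v w,
    gmet (br u v) w = gmet (nabla u v) w - gmet (nabla v u) w).
  { intros u v w; now rewrite <- gmet_subl, nabla_torsion_free. }
  rewrite !torsion.
  pose proof (nabla_metric x y z) as Mxyz.
  pose proof (nabla_metric y z x) as Myzx.
  pose proof (nabla_metric z x y) as Mzxy.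
  rewrite (gmet_sym y) in Mxyz; rewrite (gmet_sym z) in Myzx;
    rewrite (gmet_sym x) in Mzxy.
  lra.
Qed.

Lemma levi_civita_eq (x y : V4) : nabla x y = levi_civita l1 l2 l3 l4 x y.
Proof.
  rewrite (V4_gmet_basis (nabla x y)), !koszul_formula.
  destruct x, y; unfold br; apply V4_eq; expand_coords; field.
Qed.

Lemma Omega_levi_civita :
  Omega nabla = mkV (4 * l4) (- 4 * l3) (- 4 * l2) (4 * l1).
Proof.
  unfold Omega, theta, Ften, nablaP; rewrite !levi_civita_eq.
  apply V4_eq; expand_coords; ring.
Qed.

Lemma Dconn_levi_civita (x y : V4) :
  Dconn nabla x y = vscal (phi l1 l2 l3 l4 x) (Jmap y).
Proof.
  unfold Dconn, theta, Ften, nablaP.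
  rewrite Omega_levi_civita, !levi_civita_eq.
  destruct x, y; apply V4_eq; expand_coords; field.
Qed.

End LeviCivita.

Theorem proposition8p5 :
  forall (l1 l2 l3 l4 : R) (nabla : V4 -> V4 -> V4),
    is_torsion_free l1 l2 l3 l4 nabla ->
    is_metric nabla ->
    forall x y z : V4, curvD l1 l2 l3 l4 nabla x y z = vzero.
Proof.
  intros l1 l2 l3 l4 nabla Htf Hmet x y z.
  unfold curvD; rewrite !(Dconn_levi_civita _ _ _ _ _ Htf Hmet), phi_lie.
  destruct z; apply V4_eq; expand_coords; ring.
Qed.
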